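(* Let $U=\{(x_1,x_2,p_1,p_2)\in\mathbb R^2\times(\mathbb R^2\setminus\{0\}) : x_1p_1+x_2p_2\neq 0\}$, and on $U$ define $\bar D=x_1p_1+x_2p_2$, $\bar J^0=x_1p_2-x_2p_1$, $\bar J^1=-x_2\sqrt{p_1^2+p_2^2}$, $\bar J^2=x_1\sqrt{p_1^2+p_2^2}$. For real constants $a,b,c$ let $$\bar H_{a,b,c}=\operatorname{sign}(\bar D)\,\big(\bar D+a\bar J^0+b\bar J^1+c\bar J^2\big).$$ Then $\bar H_{a,b,c}$ is bounded from below on $U$ if and only if $a=b=c=0$; in that case $\bar H_{0,0,0}=|\bar D|\ge 0$.
   Context: Here $(x_1,x_2,p_1,p_2)$ are coordinates on the physical phase space of the (group-completed) metric-torus sector of 2+1 gravity, and the functions $\bar D$, $\bar J^\mu$ are the projections of the dilatation and Lorentz generators; the functions $\bar H_{a,b,c}$ are the candidate Hamiltonians generating future-directed time evolution along the constant-mean-curvature surfaces. The set $U$ corresponds to the (non-static) physical phase space, on which $\bar D\neq 0$. *)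

From Stdlib Require Import Reals.
Open Scope R_scope.

Definition sign (r : R) : R :=
  if Rlt_dec 0 r then 1 else if Rlt_dec r 0 then -1 else 0.

Definition Dbar (x1 x2 p1 p2 : R) : R := x1 * p1 + x2 * p2.
Definition J0bar (x1 x2 p1 p2 : R) : R := x1 * p2 - x2 * p1.
Definition J1bar (x1 x2 p1 p2 : R) : R := - x2 * sqrt (p1 ^ 2 + p2 ^ 2).
Definition J2bar (x1 x2 p1 p2 : R) : R := x1 * sqrt (p1 ^ 2 + p2 ^ 2).

Definition inU (x1 x2 p1 p2 : R) : Prop :=
  (p1 <> 0 \/ p2 <> 0) /\ Dbar x1 x2 p1 p2 <> 0.

Definition Hbar (a b c x1 x2 p1 p2 : R) : R :=
  sign (Dbar x1 x2 p1 p2) *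
  (Dbar x1 x2 p1 p2 + a * J0bar x1 x2 p1 p2 + b * J1bar x1 x2 p1 p2
   + c * J2bar x1 x2 p1 p2).

From Stdlib Require Import Reals Lra.
Open Scope R_scope.

(* Along the line x = p + t p^perp with |p| = 1 the dilatation D is
   constantly 1, so H is affine in t with slope -(a + b p1 + c p2).  A
   function bounded below on U has zero slope on each such line, and the unit
   vectors (1,0), (-1,0), (0,1) then force a = b = c = 0.  For a = b = c = 0,
   H = sign D * D = |D|. *)

Lemma affine_bounded_below_slope0 (m al be : R) :
  (forall t, m <= al + be * t) -> be = 0.
Proof.
  intros Hbound. destruct (Req_dec be 0) as [| Hbe]; [assumption |].
  specialize (Hbound ((m - al - 1) / be)).
  replace (al + be * ((m - al - 1) / be)) with (m - 1) in Hbound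
    by (field; assumption).
  lra.
Qed.

Lemma sign_pos (r : R) : 0 < r -> sign r = 1.
Proof. intros Hr; unfold sign; destruct (Rlt_dec 0 r); lra. Qed.

Lemma sign_mul_self (r : R) : sign r * r = Rabs r.
Proof.
  unfold sign; destruct (Rlt_dec 0 r); [rewrite Rabs_right by lra; ring |].
  destruct (Rlt_dec r 0); [rewrite Rabs_left by lra; ring |].
  replace r with 0 by lra. rewrite Rabs_R0. ring.
Qed.

Lemma Hbar0_abs (x1 x2 p1 p2 : R) :
  Hbar 0 0 0 x1 x2 p1 p2 = Rabs (Dbar x1 x2 p1 p2).
Proof.
  unfold Hbar. rewrite <- sign_mul_self. f_equal. ring.
Qed.

Section UnitLine.

Variables p1 p2 t : R.
Hypothesis p_unit : p1 ^ 2 + p2 ^ 2 = 1.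

Lemma Dbar_unit_line : Dbar (p1 - t * p2) (p2 + t * p1) p1 p2 = 1.
Proof. unfold Dbar. rewrite <- p_unit. ring. Qed.

Lemma inU_unit_line : inU (p1 - t * p2) (p2 + t * p1) p1 p2.
Proof.
  split; [| rewrite Dbar_unit_line; lra].
  destruct (Req_dec p1 0) as [-> |]; [right | left]; [| assumption].
  intros ->. lra.
Qed.

Lemma Hbar_unit_line (a b c : R) :
  Hbar a b c (p1 - t * p2) (p2 + t * p1) p1 p2
  = 1 + c * p1 - b * p2 - (a + b * p1 + c * p2) * t.
Proof.
  unfold Hbar. rewrite Dbar_unit_line, sign_pos by lra.
  unfold J0bar, J1bar, J2bar. rewrite p_unit, sqrt_1.
  transitivity
    (1 + c * p1 - b * p2 - ((p1 ^ 2 + p2 ^ 2) * a + b * p1 + c * p2) * t);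
    [ring | rewrite p_unit; ring].
Qed.

End UnitLine.

Lemma Hbar_bounded_below_slope0 (a b c m p1 p2 : R) :
  (forall x1 x2 q1 q2, inU x1 x2 q1 q2 -> m <= Hbar a b c x1 x2 q1 q2) ->
  p1 ^ 2 + p2 ^ 2 = 1 -> a + b * p1 + c * p2 = 0.
Proof.
  intros Hbound Hp.
  enough (Hs : - (a + b * p1 + c * p2) = 0) by lra.
  apply (affine_bounded_below_slope0 m (1 + c * p1 - b * p2)).
  intros t. replace (1 + c * p1 - b * p2 + - (a + b * p1 + c * p2) * t)
    with (Hbar a b c (p1 - t * p2) (p2 + t * p1) p1 p2)
    by (rewrite Hbar_unit_line by exact Hp; ring).
  apply Hbound, inU_unit_line, Hp.
Qed.

Theorem mainTheorem2 (a b c : R) :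
  ((exists m : R, forall x1 x2 p1 p2 : R,
       inU x1 x2 p1 p2 -> m <= Hbar a b c x1 x2 p1 p2)
   <-> (a = 0 /\ b = 0 /\ c = 0))
  /\ (forall x1 x2 p1 p2 : R, inU x1 x2 p1 p2 ->
        Hbar 0 0 0 x1 x2 p1 p2 = Rabs (Dbar x1 x2 p1 p2)
        /\ 0 <= Hbar 0 0 0 x1 x2 p1 p2).
Proof.
  split; [split |].
  - intros [m Hbound].
    pose proof (Hbar_bounded_below_slope0 a b c m 1 0 Hbound) as H10.
    pose proof (Hbar_bounded_below_slope0 a b c m (-1) 0 Hbound) as Hm10.
    pose proof (Hbar_bounded_below_slope0 a b c m 0 1 Hbound) as H01.
    assert (a + b = 0) by (rewrite <- H10 by lra; ring).
    assert (a - b = 0) by (rewrite <- Hm10 by lra; ring).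
    assert (a + c = 0) by (rewrite <- H01 by lra; ring).
    lra.
  - intros (-> & -> & ->). exists 0. intros x1 x2 p1 p2 _.
    rewrite Hbar0_abs. apply Rabs_pos.
  - intros x1 x2 p1 p2 _. rewrite Hbar0_abs.
    split; [reflexivity | apply Rabs_pos].
Qed.
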